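(* Let $\alpha$ be any smooth section over $\mathcal D_e^-$ of $\mathrm{End}^1(E)$ with $[\alpha,\delta]=\alpha\delta+\delta\alpha=1$ ($\alpha$ need not square to zero). Then the 1-form $\kappa=\mathrm{Tr_s}[\alpha\,\mathbf d\delta]$ on $\mathcal D_e^-$ does not depend on the choice of $\alpha$, and it is closed. Moreover, for every smooth section $f$ of $T^*\mathcal D_e^-\widehat\otimes\mathrm{End}^0(E)$, $$\mathrm{Tr_s}\big[\alpha[f,\delta]\big]=\mathrm{Tr_s}[f] .$$
   Context: $E=\bigoplus_{i=p}^qE^i$ is a finite-dimensional complex $\mathbb Z$-graded vector space. $\mathrm{End}(E)$ is graded by degree and $\mathbb Z_2$-graded by parity, and $[A,B]=AB-(-1)^{\deg A\deg B}BA$ is the supercommutator. $\mathcal D_e^-$ is the (nonempty) manifold of exact differentials $\delta\in\mathrm{End}^{-1}(E)$ with $\delta^2=0$. $\mathbf d$ is the de Rham operator on $\mathcal D_e^-$, and $\delta$ is the tautological function. Products are in $\Lambda(T^*\mathcal D_e^-)\widehat\otimes\mathrm{End}(E)$ (graded tensor product, 1-forms odd). $\mathrm{Tr_s}[A]=\mathrm{Tr}[(-1)^NA]$, where $N$ is the number operator ($N=i$ on $E^i$), extended to $\Lambda(T^*\mathcal D_e^-)$-valued endomorphisms by $\mathrm{Tr_s}[\beta A]=\beta\,\mathrm{Tr_s}[A]$. *)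

From mathcomp Require Import all_boot all_order all_algebra.
From mathcomp Require Import complex.
From mathcomp Require Import reals topology normedtype derive.
Import GRing.Theory.

Set Implicit Arguments.
Unset Strict Implicit.
Unset Printing Implicit Defensive.

Local Open Scope ring_scope.

Section SuperDefs.
Variable R : realType.

Definition prm (m : nat) : normedModType R := 'rV[R]_m.

Fixpoint diter (m : nat) (vs : seq (prm m)) (g : prm m -> R) : prm m -> R :=
  if vs is v :: vs' then fun x => @derive R (prm m) R^o (diter vs' g) x v else g.

Definition smoothR (m : nat) (g : prm m -> R) : Prop :=
  forall vs : seq (prm m),
    continuous (diter vs g : prm m -> R^o) /\
    forall x v, @derivable R (prm m) R^o (diter vs g) x v.

Definition smoothC (m : nat) (g : prm m -> R[i]) : Prop :=
  smoothR (fun x => Re (g x)) /\ smoothR (fun x => Im (g x)).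

Definition smoothM (m n : nat) (phi : prm m -> 'M[R[i]]_n) : Prop :=
  forall i j, smoothC (fun x => phi x i j).

Definition derivableC (m : nat) (g : prm m -> R[i]) (x w : prm m) : Prop :=
  @derivable R (prm m) R^o (fun y => Re (g y)) x w /\
  @derivable R (prm m) R^o (fun y => Im (g y)) x w.

Definition dirC (m : nat) (g : prm m -> R[i]) (x w : prm m) : R[i] :=
  (@derive R (prm m) R^o (fun y => Re (g y)) x w
     +i* @derive R (prm m) R^o (fun y => Im (g y)) x w)%C.

Definition dirM (m n : nat) (phi : prm m -> 'M[R[i]]_n) (x w : prm m)
  : 'M[R[i]]_n := \matrix_(i, j) dirC (fun y => phi y i j) x w.

(* The graded space E = C^n, with basis vector e_i in degree deg i.    *)
(* End(E) = 'M_n acting on column vectors; A i j is the e_i-coefficient *)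
(* of A e_j.                                                           *)
Variable n : nat.
Variable deg : 'I_n -> int.

Notation Mat := 'M[R[i]]_n.

Definition homog (k : int) (A : Mat) : Prop :=
  forall i j, A i j != 0 -> deg i = (deg j + k)%R.

Definition trs (A : Mat) : R[i] := \sum_(i < n) (-1) ^ (deg i) * A i i.

Definition exact_diff (d : Mat) : Prop :=
  homog (-1) d /\ d *m d = 0 /\
  (forall x : 'cV[R[i]]_n, d *m x = 0 -> exists y : 'cV[R[i]]_n, x = d *m y).

Definition mapsInto (m : nat) (phi : prm m -> Mat) : Prop :=
  forall x, exact_diff (phi x).

Definition smooth_section (a : Mat -> Mat) : Prop :=
  forall m (phi : prm m -> Mat), smoothM phi -> mapsInto phi ->
    smoothM (fun x => a (phi x)).

Definition tangent (d v : Mat) : Prop :=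
  exists m (phi : prm m -> Mat) (x w : prm m),
    [/\ smoothM phi, mapsInto phi, phi x = d & dirM phi x w = v].

(* End(E)-valued 1-forms: an eform omega gives at each point d of D_e^-  *)
(* and each tangent vector v the endomorphism omega d v.               *)
(* Products in Lambda(T^* D) (x) End(E) follow the Koszul sign rule    *)
(* (1-forms odd).                                                      *)
Definition eform := Mat -> Mat -> Mat.
Definition sform := Mat -> Mat -> R[i].

(* the End-valued 1-form  d delta  (de Rham differential of the tautological function) *)
Definition d_delta : eform := fun _ v => v.

Definition taut : Mat -> Mat := fun d => d.

(* A * omega, for A a section of End(E) of parity p (Koszul sign (-1)^p) *)
Definition lmul (p : nat) (A : Mat -> Mat) (omega : eform) : eform :=
  fun d v => (-1) ^+ p *: (A d *m omega d v).

Definition rmul (omega : eform) (B : Mat -> Mat) : eform :=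
  fun d v => omega d v *m B d.

(* supercommutator [omega, B], omega a 1-eform with End-part of parity p
   (total parity p+1), B a section of End(E) of parity q *)
Definition scomm (omega : eform) (p : nat) (B : Mat -> Mat) (q : nat) : eform :=
  fun d v => rmul omega B d v - (-1) ^+ (p.+1 * q) *: lmul q B omega d v.

Definition trs_form (omega : eform) : sform := fun d v => trs (omega d v).

Definition smooth_sform (k : sform) : Prop :=
  forall m (phi : prm m -> Mat) (w : prm m),
    smoothM phi -> mapsInto phi -> smoothC (fun y => k (phi y) (dirM phi y w)).

(* closed (smooth) scalar 1-eform: d k = 0, i.e. the pull-back of k by every
   smooth 2-parameter map into D_e^- is closed *)
Definition closed_sform (k : sform) : Prop :=
  smooth_sform k /\
  forall (phi : prm 2 -> Mat), smoothM phi -> mapsInto phi ->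
    forall x,
      let e1 : prm 2 := delta_mx 0 0 in
      let e2 : prm 2 := delta_mx 0 1 in
      dirC (fun y => k (phi y) (dirM phi y e2)) x e1 =
      dirC (fun y => k (phi y) (dirM phi y e1)) x e2.

Definition form_section (p : int) (f : eform) : Prop :=
  [/\ (forall d v, exact_diff d -> tangent d v -> homog p (f d v)),
      (forall d u v (a : R), exact_diff d -> tangent d u -> tangent d v ->
          f d ((a%:C)%C *: u + v) = (a%:C)%C *: f d u + f d v) &
      (forall m (phi : prm m -> Mat) (w : prm m),
          smoothM phi -> mapsInto phi ->
          smoothM (fun y => f (phi y) (dirM phi y w)))].

Definition admissible_alpha (a : Mat -> Mat) : Prop :=
  smooth_section a /\
  forall d, exact_diff d -> homog 1 (a d) /\ a d *m d + d *m a d = 1%:M.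

(* kappa = Tr_s[alpha d delta]  (alpha odd) *)
Definition kappa (a : Mat -> Mat) : sform := trs_form (lmul 1 a d_delta).

End SuperDefs.

From mathcomp Require Import all_boot all_order all_algebra.
From mathcomp Require Import complex ring.
From mathcomp Require Import boolp classical_sets functions reals topology normedtype derive.
Import Order.TTheory GRing.Theory Num.Theory numFieldNormedType.Exports.

Set Implicit Arguments.
Unset Strict Implicit.
Unset Printing Implicit Defensive.

Local Open Scope ring_scope.

(* The supertrace is graded cyclic: Tr_s[A B] = (-1)^(|A| |B|) Tr_s[B A].  A tangent
   vector v at delta is odd and anticommutes with delta, and alpha is a contracting
   homotopy: alpha delta + delta alpha = 1.  For an even f, cyclicity gives
   Tr_s[alpha [f, delta]] = Tr_s[[alpha, delta] f] = Tr_s[f].  The difference beta of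
   two contracting homotopies anticommutes with delta, so
   Tr_s[beta v] = Tr_s[beta v (alpha delta + delta alpha)] vanishes by cyclicity; hence
   kappa = - Tr_s[alpha v] does not depend on alpha.  For closedness, pull kappa back
   along a smooth two-parameter family delta(s1, s2): the terms Tr_s[alpha D1 D2 delta]
   are symmetric by Schwarz's theorem, and differentiating alpha delta + delta alpha = 1
   turns Tr_s[D1 alpha D2 delta] into Tr_s[D1 delta alpha D2 delta alpha] plus a
   vanishing term, which is symmetric in 1, 2 by cyclicity. *)

Section SmoothReal.
Variables (R : realType) (m : nat).
Notation V := (prm R m).
Implicit Types (f g : V -> R) (vs : seq V).

Lemma diter_cat vs ws f : diter (vs ++ ws) f = diter vs (diter ws f).
Proof. by elim: vs => //= v vs ->. Qed.

Lemma diter_continuous f vs : smoothR f -> continuous (diter vs f : V -> R^o).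
Proof. by move=> sf; case: (sf vs). Qed.

Lemma diter_derivable f vs x v : smoothR f -> @derivable R V R^o (diter vs f) x v.
Proof. by move=> sf; case: (sf vs) => _; apply. Qed.

Lemma smoothR_derivable f x v : smoothR f -> @derivable R V R^o f x v.
Proof. exact: (@diter_derivable f [::]). Qed.

Lemma smoothR_derive f w : smoothR f -> smoothR (fun x => @derive R V R^o f x w).
Proof. by move=> sf vs; have := sf (vs ++ [:: w]); rewrite diter_cat. Qed.

Lemma smoothR_cst (c : R) : smoothR (fun _ : V => c).
Proof.
have diter_cst vs : exists c', diter vs (fun _ : V => c) = (fun _ => c').
  elim: vs => [|v vs [c' IH]] /=; first by exists c.
  by exists 0; apply/funext => x; rewrite IH; apply: (derive_cst (c' : R^o)).
move=> vs; have [c' ->] := diter_cst vs; split; first exact: cst_continuous.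
by move=> x v; apply: (derivable_cst (c' : R^o)).
Qed.

Lemma smoothR_add f g : smoothR f -> smoothR g -> smoothR (fun x => f x + g x).
Proof.
move=> sf sg.
have diterD vs : diter vs (fun x => f x + g x) = (fun x => diter vs f x + diter vs g x).
  elim: vs => // v vs IH /=; apply/funext => x; rewrite IH.
  by apply: (@deriveD R V R^o); apply: diter_derivable.
move=> vs; rewrite diterD; split.
  by move=> x; apply: (@continuousD R R^o); apply: diter_continuous.
by move=> x v; apply: (@derivableD R V R^o); apply: diter_derivable.
Qed.

(* By the Leibniz rule, every iterated derivative of [f * g] is of this form. *)
Definition leibniz f g (l : seq (seq V * seq V)) : V -> R :=
  fun x => \sum_(p <- l) diter p.1 f x * diter p.2 g x.

Definition leibniz_step (v : V) (l : seq (seq V * seq V)) :=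
  flatten [seq [:: (v :: p.1, p.2); (p.1, v :: p.2)] | p <- l].

Lemma leibniz_cons f g p l :
  leibniz f g (p :: l) = ((fun x => diter p.1 f x * diter p.2 g x : R^o) + leibniz f g l)%R.
Proof. by apply/funext => x; rewrite /leibniz big_cons. Qed.

Lemma leibniz_derive f g l x v : smoothR f -> smoothR g ->
  @derivable R V R^o (leibniz f g l) x v /\
  @derive R V R^o (leibniz f g l) x v = leibniz f g (leibniz_step v l) x.
Proof.
move=> sf sg; elim: l => [|p l [IHd IHe]].
  have -> : leibniz f g [::] = cst (0 : R^o) by apply/funext => y; rewrite /leibniz big_nil.
  by split; [apply: derivable_cst | rewrite derive_cst].
have df : @derivable R V R^o (diter p.1 f) x v by apply: diter_derivable.
have dg : @derivable R V R^o (diter p.2 g) x v by apply: diter_derivable.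
have dfg := @derivableM R V _ _ x v df dg.
rewrite leibniz_cons; split; first exact: (@derivableD R V R^o _ _ x v dfg IHd).
rewrite (@deriveD R V R^o _ _ x v dfg IHd) (deriveM df dg) IHe.
rewrite /leibniz /leibniz_step /= !big_cons /= /GRing.scale /=.
by rewrite addrA [_ * _ + _]addrC [diter p.2 g x * _]mulrC.
Qed.

Lemma leibniz_continuous f g l : smoothR f -> smoothR g ->
  continuous (leibniz f g l : V -> R^o).
Proof.
move=> sf sg; elim: l => [|p l IH].
  have -> : leibniz f g [::] = cst (0 : R^o) by apply/funext => y; rewrite /leibniz big_nil.
  exact: cst_continuous.
rewrite leibniz_cons => x; apply: (@continuousD R R^o); last exact: IH.
by apply: (@continuousM R V); apply: diter_continuous.
Qed.

Lemma smoothR_mul f g : smoothR f -> smoothR g -> smoothR (fun x => f x * g x).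
Proof.
move=> sf sg.
have diterM vs : exists l, diter vs (fun x => f x * g x) = leibniz f g l.
  elim: vs => [|v vs [l IH]].
    by exists [:: ([::], [::])]; apply/funext => y; rewrite /leibniz big_seq1.
  exists (leibniz_step v l); rewrite /= IH; apply/funext => y.
  by case: (leibniz_derive l y v sf sg).
move=> vs; have [l ->] := diterM vs; split; first exact: leibniz_continuous.
by move=> x v; case: (leibniz_derive l x v sf sg).
Qed.

Lemma smoothR_sub f g : smoothR f -> smoothR g -> smoothR (fun x => f x - g x).
Proof.
move=> sf sg; have sNg : smoothR (fun x => - g x).
  have := smoothR_mul (smoothR_cst (-1)) sg.
  by congr smoothR; apply/funext => y; rewrite mulN1r.
exact: (smoothR_add sf sNg).
Qed.

End SmoothReal.

Section Schwarz.
Variables (R : realType) (V : normedModType R).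
Implicit Types (F : V -> R^o) (u v x : V).

Lemma is_derive_line F (p w : V) (t : R) : derivable F (p + t *: w) w ->
  is_derive t 1 (fun s : R => F (p + s *: w) : R^o) ('D_w F (p + t *: w)).
Proof.
move=> dF.
have E : (fun h : R => h^-1 *: (((fun s : R => F (p + s *: w)) \o shift t) (h *: (1 : R))
                                  - F (p + t *: w)))
       = (fun h : R => h^-1 *: ((F \o shift (p + t *: w)) (h *: w) - F (p + t *: w))).
  apply/funext => h /=; congr (_ *: (F _ - _)).
  by rewrite [h *: 1]mulr1 scalerDl addrCA.
have dg : derivable (fun s : R => F (p + s *: w) : R^o) t 1 by rewrite /derivable /= E.
by apply: DeriveDef => //; rewrite /derive /= E.
Qed.

Lemma MVT_derivable (g : R -> R) (a b : R) : (forall t, derivable g t 1) -> a < b ->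
  exists2 c, a < c < b & g b - g a = 'D_1 g c * (b - a).
Proof.
move=> dg ab; have [t _ | |c] := @MVT R g (fun t => 'D_1 g t) a b ab.
- exact: derivableP.
- apply/continuous_subspaceT => t.
  by apply: differentiable_continuous; apply/derivable1_diffP.
- by rewrite in_itv /= => cab E; exists c.
Qed.

Definition mixed_derive F (u v : V) : V -> R^o := fun y => 'D_u (fun z => 'D_v F z : R^o) y.

Definition second_diff F (u v x : V) (h : R) : R :=
  F (x + h *: u + h *: v) - F (x + h *: u) - F (x + h *: v) + F x.

Lemma second_diffC F u v x h : second_diff F v u x h = second_diff F u v x h.
Proof. by rewrite /second_diff [x + h *: v + _]addrAC; ring. Qed.

Lemma second_diff_MVT F u v x (h : R) :
  (forall y, derivable F y v) -> (forall y, derivable (fun z => 'D_v F z : R^o) y u) ->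
  0 < h -> exists s t, [/\ 0 < s < h, 0 < t < h &
     second_diff F u v x h = h ^+ 2 * mixed_derive F u v (x + s *: u + t *: v)].
Proof.
move=> dF ddF h0.
pose g s := (F (x + h *: u + s *: v) - F (x + s *: v) : R^o).
have gd (t : R) : is_derive t 1 g ('D_v F (x + h *: u + t *: v) - 'D_v F (x + t *: v)).
  by apply: is_deriveB; apply: is_derive_line; exact: dF.
have [t /andP[t0 th] Eg] := MVT_derivable (fun t => (gd t).(ex_derive)) h0.
pose k s := ('D_v F (x + t *: v + s *: u) : R^o).
have kd (s : R) : is_derive s 1 k (mixed_derive F u v (x + t *: v + s *: u)).
  by apply: is_derive_line; exact: ddF.
have [s /andP[s0 sh] Ek] := MVT_derivable (fun s => (kd s).(ex_derive)) h0.
exists s, t; split; [by rewrite s0 | by rewrite t0 |].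
have -> : second_diff F u v x h = g h - g 0 by rewrite /second_diff /g !scale0r !addr0; ring.
rewrite Eg (@derive_val _ _ _ _ _ _ _ (gd t)).
have -> : 'D_v F (x + h *: u + t *: v) - 'D_v F (x + t *: v) = k h - k 0.
  by rewrite /k scale0r addr0 [x + h *: u + _]addrAC.
rewrite Ek (@derive_val _ _ _ _ _ _ _ (kd s)) subr0 [x + s *: u + _]addrAC.
by rewrite expr2 -mulrA mulrC.
Qed.

Lemma ball_shift u v x (r h s t : R) : h * (`|u| + `|v| + 1) < r ->
  0 < s < h -> 0 < t < h -> ball x r (x + s *: u + t *: v).
Proof.
move=> hK /andP[s0 sh] /andP[t0 th]; rewrite -ball_normE /ball_ /=.
rewrite opprD addrA opprD addrA subrr sub0r -opprD normrN.
apply: (le_lt_trans (ler_normD _ _)); rewrite !normrZ.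
apply: le_lt_trans hK; rewrite mulrDr mulrDr mulr1 -addrA lerD //.
  by rewrite ger0_norm ?(ltW s0) //; apply: ler_wpM2r => //; apply: ltW.
rewrite ger0_norm ?(ltW t0) // ler_wpDr ?(ltW (lt_trans s0 sh)) //.
by apply: ler_wpM2r => //; apply: ltW.
Qed.

(* Schwarz: if both mixed derivatives were different at [x], by continuity they
   would stay apart on a small ball, but [second_diff] is symmetric in [u, v] and
   equals [h^2] times a value of either mixed derivative inside that ball. *)
Lemma mixed_deriveC F u v x :
  (forall y, derivable F y v) -> (forall y, derivable F y u) ->
  (forall y, derivable (fun z => 'D_v F z : R^o) y u) ->
  (forall y, derivable (fun z => 'D_u F z : R^o) y v) ->
  {for x, continuous (mixed_derive F u v)} -> {for x, continuous (mixed_derive F v u)} ->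
  mixed_derive F u v x = mixed_derive F v u x.
Proof.
move=> dFv dFu ddv ddu cuv cvu.
set a := mixed_derive F u v x; set b := mixed_derive F v u x.
have [//|ab] := eqVneq a b.
pose e : R := `|a - b| / 2.
have e0 : 0 < e by rewrite divr_gt0 // normr_gt0 subr_eq0.
have near_a : \forall y \near x, `|a - mixed_derive F u v y| < e.
  by move: cuv => /cvgrPdist_lt; apply.
have near_b : \forall y \near x, `|b - mixed_derive F v u y| < e.
  by move: cvu => /cvgrPdist_lt; apply.
have [r r0 Hr] := (nbhs_ballP _ _).1 (filterI near_a near_b).
clear near_a near_b cuv cvu; clearbody a b.
pose K : R := `|u| + `|v| + 1.
have K0 : 0 < K by rewrite ltr_pwDr // addr_ge0.
pose h : R := r / (2 * K).
have h0 : 0 < h by rewrite divr_gt0 // mulr_gt0.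
have hK : h * K < r.
  rewrite /h -mulrA invfM -mulrA mulVf ?gt_eqF // mulr1.
  by rewrite ltr_pdivrMr // ltr_pMr // ltr1n.
have [s1 [t1 [st1 tt1 E1]]] := second_diff_MVT x dFv ddv h0.
have [s2 [t2 [st2 tt2 E2]]] := second_diff_MVT x dFu ddu h0.
rewrite second_diffC E1 in E2.
have h2 : h ^+ 2 != 0 by rewrite sqrf_eq0 gt_eqF.
have {}E2 := mulfI h2 E2.
have [Ba _] := Hr _ (ball_shift x hK st1 tt1).
have [_ Bb] := Hr _ (ball_shift x hK tt2 st2).
rewrite [x + t2 *: u + _]addrAC -E2 in Bb.
move: Ba Bb; move: (mixed_derive F u v _) => D Ba Bb.
have : `|a - b| < e + e.
  by apply: (le_lt_trans (ler_distD D _ _)); rewrite distrC in Bb; exact: ltrD.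
by rewrite /e; move: `|a - b| => z; rewrite -splitr ltxx.
Qed.

End Schwarz.

Local Notation Re := complex.Re.
Local Notation Im := complex.Im.

Section SmoothComplex.
Variables (R : realType) (m : nat).
Notation V := (prm R m).
Implicit Types (g h : V -> R[i]).

Lemma ReD (a b : R[i]) : Re (a + b) = Re a + Re b. Proof. by case: a; case: b. Qed.
Lemma ImD (a b : R[i]) : Im (a + b) = Im a + Im b. Proof. by case: a; case: b. Qed.
Lemma ReM (a b : R[i]) : Re (a * b) = Re a * Re b - Im a * Im b.
Proof. by case: a; case: b. Qed.
Lemma ImM (a b : R[i]) : Im (a * b) = Re a * Im b + Im a * Re b.
Proof. by case: a; case: b. Qed.

Lemma smoothR_deriveC (F : V -> R) (u v x : V) : smoothR F ->
  'D_u (fun y => 'D_v (F : V -> R^o) y : R^o) x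
  = 'D_v (fun y => 'D_u (F : V -> R^o) y : R^o) x.
Proof.
move=> sF; apply: (@mixed_deriveC R V F u v x) => [y|y|y|y||].
- exact: smoothR_derivable.
- exact: smoothR_derivable.
- exact: (@diter_derivable _ _ _ [:: v]).
- exact: (@diter_derivable _ _ _ [:: u]).
- exact: (@diter_continuous _ _ _ [:: u; v]).
- exact: (@diter_continuous _ _ _ [:: v; u]).
Qed.

Lemma smoothC_cst (c : R[i]) : smoothC (fun _ : V => c).
Proof. by split; apply: smoothR_cst. Qed.

Lemma smoothC_add g h : smoothC g -> smoothC h -> smoothC (fun y => g y + h y).
Proof.
case=> g1 g2 [h1 h2]; split.
  have := smoothR_add g1 h1; congr smoothR; apply/funext => y; exact/esym/ReD.
have := smoothR_add g2 h2; congr smoothR; apply/funext => y; exact/esym/ImD.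
Qed.

Lemma smoothC_mul g h : smoothC g -> smoothC h -> smoothC (fun y => g y * h y).
Proof.
case=> g1 g2 [h1 h2]; split.
  have := smoothR_sub (smoothR_mul g1 h1) (smoothR_mul g2 h2).
  by congr smoothR; apply/funext => y; rewrite ReM.
have := smoothR_add (smoothR_mul g1 h2) (smoothR_mul g2 h1).
by congr smoothR; apply/funext => y; rewrite ImM.
Qed.

Lemma smoothC_sum k (F : 'I_k -> V -> R[i]) :
  (forall i, smoothC (F i)) -> smoothC (fun y => \sum_(i < k) F i y).
Proof.
elim: k F => [|k IH] F sF.
  have := smoothC_cst 0; congr smoothC; apply/funext => y; by rewrite big_ord0.
have := smoothC_add (IH _ (fun i => sF (widen_ord (leqnSn k) i))) (sF ord_max).
by congr smoothC; apply/funext => y; rewrite big_ord_recr.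
Qed.

Lemma smoothC_dir g w : smoothC g -> smoothC (fun y => dirC g y w).
Proof. by case=> g1 g2; exact: (conj (smoothR_derive w g1) (smoothR_derive w g2)). Qed.

Lemma dirC_ext g h x w : (forall y, g y = h y) -> dirC g x w = dirC h x w.
Proof. by move=> /funext ->. Qed.

Lemma dirC_cst (c : R[i]) x w : dirC (fun _ : V => c) x w = 0.
Proof.
by rewrite /dirC (derive_cst (Re c : R^o) x w) (derive_cst (Im c : R^o) x w).
Qed.

Lemma dirC_add g h x w : smoothC g -> smoothC h ->
  dirC (fun y => g y + h y) x w = dirC g x w + dirC h x w.
Proof.
case=> g1 g2 [h1 h2]; rewrite /dirC.
have -> : (fun y => Re (g y + h y)) = ((fun y => Re (g y) : R^o) + (fun y => Re (h y)))%R.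
  by apply/funext => y; rewrite ReD.
have -> : (fun y => Im (g y + h y)) = ((fun y => Im (g y) : R^o) + (fun y => Im (h y)))%R.
  by apply/funext => y; rewrite ImD.
by rewrite !deriveD //; apply: smoothR_derivable.
Qed.

Lemma dirC_mul g h x w : smoothC g -> smoothC h ->
  dirC (fun y => g y * h y) x w = dirC g x w * h x + g x * dirC h x w.
Proof.
case=> g1 g2 [h1 h2]; rewrite /dirC.
set G1 := (fun y => Re (g y)); set G2 := (fun y => Im (g y)).
set H1 := (fun y => Re (h y)); set H2 := (fun y => Im (h y)).
have -> : (fun y => Re (g y * h y)) =
    ((G1 : V -> R^o) * (H1 : V -> R^o) - (G2 : V -> R^o) * (H2 : V -> R^o))%R.
  by apply/funext => y; rewrite ReM.
have -> : (fun y => Im (g y * h y)) =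
    ((G1 : V -> R^o) * (H2 : V -> R^o) + (G2 : V -> R^o) * (H1 : V -> R^o))%R.
  by apply/funext => y; rewrite ImM.
have dG1 := smoothR_derivable (x := x) (v := w) g1.
have dG2 := smoothR_derivable (x := x) (v := w) g2.
have dH1 := smoothR_derivable (x := x) (v := w) h1.
have dH2 := smoothR_derivable (x := x) (v := w) h2.
rewrite (deriveB (derivableM dG1 dH1) (derivableM dG2 dH2)).
rewrite (deriveD (derivableM dG1 dH2) (derivableM dG2 dH1)).
rewrite (deriveM dG1 dH1) (deriveM dG2 dH2) (deriveM dG1 dH2) (deriveM dG2 dH1).
move: ('D_w G1 x) ('D_w G2 x) ('D_w H1 x) ('D_w H2 x) => a1 a2 b1 b2.
rewrite /G1 /G2 /H1 /H2 /GRing.scale /=.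
by apply/eqP; rewrite eq_complex /= ?ReD ?ImD ?ReM ?ImM /=; apply/andP; split; apply/eqP; ring.
Qed.

Lemma dirC_sum k (F : 'I_k -> V -> R[i]) x w :
  (forall i, smoothC (F i)) ->
  dirC (fun y => \sum_(i < k) F i y) x w = \sum_(i < k) dirC (F i) x w.
Proof.
elim: k F => [|k IH] F sF.
  by rewrite (@dirC_ext _ (fun _ => 0)) ?dirC_cst ?big_ord0 // => y; rewrite big_ord0.
rewrite (@dirC_ext _ (fun y => \sum_(i < k) F (widen_ord (leqnSn k) i) y + F ord_max y));
  last by move=> y; rewrite big_ord_recr.
rewrite dirC_add //; last exact: smoothC_sum.
by rewrite IH // big_ord_recr.
Qed.

Lemma dirC_dirC g (u v x : V) : smoothC g ->
  dirC (fun y => dirC g y v) x u = dirC (fun y => dirC g y u) x v.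
Proof.
by case=> g1 g2; rewrite /dirC /= (smoothR_deriveC u v x g1) (smoothR_deriveC u v x g2).
Qed.

End SmoothComplex.

Section SmoothMatrix.
Variables (R : realType) (m n : nat).
Notation V := (prm R m).
Notation Mat := 'M[R[i]]_n.
Implicit Types (A B : V -> Mat).

Lemma dirM_ext A B x w : (forall y, A y = B y) -> dirM A x w = dirM B x w.
Proof. by move=> /funext ->. Qed.

Lemma dirM_cst (M : Mat) x w : dirM (fun _ : V => M) x w = 0.
Proof. by apply/matrixP => i j; rewrite !mxE dirC_cst. Qed.

Lemma smoothM_mul A B : smoothM A -> smoothM B -> smoothM (fun y => A y *m B y).
Proof.
move=> sA sB i j; have := smoothC_sum (fun k => smoothC_mul (sA i k) (sB k j)).
by congr smoothC; apply/funext => y; rewrite mxE.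
Qed.

Lemma smoothM_scale (c : R[i]) A : smoothM A -> smoothM (fun y => c *: A y).
Proof.
move=> sA i j; have := smoothC_mul (smoothC_cst _ c) (sA i j).
by congr smoothC; apply/funext => y; rewrite mxE.
Qed.

Lemma smoothM_dir A w : smoothM A -> smoothM (fun y => dirM A y w).
Proof.
move=> sA i j; have := smoothC_dir w (sA i j).
by congr smoothC; apply/funext => y; rewrite mxE.
Qed.

Lemma dirM_add A B x w : smoothM A -> smoothM B ->
  dirM (fun y => A y + B y) x w = dirM A x w + dirM B x w.
Proof.
move=> sA sB; apply/matrixP => i j; rewrite !mxE.
by rewrite (@dirC_ext _ _ _ (fun y => A y i j + B y i j)) ?dirC_add // => y; rewrite mxE.
Qed.

Lemma dirM_scale (c : R[i]) A x w : smoothM A ->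
  dirM (fun y => c *: A y) x w = c *: dirM A x w.
Proof.
move=> sA; apply/matrixP => i j; rewrite !mxE.
rewrite (@dirC_ext _ _ _ (fun y => c * A y i j)); last by move=> y; rewrite mxE.
by rewrite dirC_mul ?dirC_cst ?mul0r ?add0r //; apply: smoothC_cst.
Qed.

Lemma dirM_mul A B x w : smoothM A -> smoothM B ->
  dirM (fun y => A y *m B y) x w = dirM A x w *m B x + A x *m dirM B x w.
Proof.
move=> sA sB; apply/matrixP => i j; rewrite !mxE.
rewrite (@dirC_ext _ _ _ (fun y => \sum_k A y i k * B y k j)); last by move=> y; rewrite mxE.
rewrite dirC_sum; last by move=> k; apply: smoothC_mul.
rewrite -big_split /=; apply: eq_bigr => k _.
by rewrite dirC_mul // !mxE.
Qed.

Lemma dirM_dirM A (u v x : V) : smoothM A ->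
  dirM (fun y => dirM A y v) x u = dirM (fun y => dirM A y u) x v.
Proof.
move=> sA; apply/matrixP => i j.
have E a b : dirM (fun y => dirM A y b) x a i j
           = dirC (fun y => dirC (fun z => A z i j) y b) x a.
  by rewrite mxE; apply: dirC_ext => y; rewrite mxE.
by apply: (etrans (E u v)); apply: (etrans _ (esym (E v u))); apply: dirC_dirC.
Qed.

Variable deg : 'I_n -> int.

Lemma smoothC_trs A : smoothM A -> smoothC (fun y => trs deg (A y)).
Proof.
by move=> sA; apply: smoothC_sum => i; apply: smoothC_mul => //; apply: smoothC_cst.
Qed.

Lemma dirC_trs A x w : smoothM A ->
  dirC (fun y => trs deg (A y)) x w = trs deg (dirM A x w).
Proof.
move=> sA; rewrite /trs dirC_sum; last first.
  by move=> i; apply: smoothC_mul => //; apply: smoothC_cst.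
apply: eq_bigr => i _; rewrite dirC_mul //; last exact: smoothC_cst.
by rewrite dirC_cst mul0r add0r mxE.
Qed.

Lemma homog_dirM A x w (k : int) :
  (forall y, homog deg k (A y)) -> homog deg k (dirM A x w).
Proof.
move=> hA i j; rewrite mxE => nz.
have [//|ne] := eqVneq (deg i) (deg j + k).
move: nz; rewrite (@dirC_ext _ _ _ (fun _ => 0)) ?dirC_cst ?eqxx // => y.
by apply/eqP; apply: contraR ne => /(hA y) /eqP.
Qed.

End SmoothMatrix.

Section Supertrace.
Variables (R : realType) (n : nat) (deg : 'I_n -> int).
Notation Mat := 'M[R[i]]_n.
Notation t := (trs deg).
Implicit Types (A B F U W d v : Mat).

Lemma trsD A B : t (A + B) = t A + t B.
Proof. by rewrite /trs -big_split; apply: eq_bigr => i _; rewrite mxE mulrDr. Qed.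

Lemma trsZ (c : R[i]) A : t (c *: A) = c * t A.
Proof. by rewrite /trs mulr_sumr; apply: eq_bigr => i _; rewrite mxE mulrCA. Qed.

Lemma trsN A : t (- A) = - t A.
Proof. by rewrite -scaleN1r trsZ mulN1r. Qed.

Lemma trsB A B : t (A - B) = t A - t B.
Proof. by rewrite trsD trsN. Qed.

Lemma homog_mul (a b : int) A B :
  homog deg a A -> homog deg b B -> homog deg (a + b) (A *m B).
Proof.
move=> hA hB i j; rewrite mxE => nz.
have [k nzk] : exists k, A i k * B k j != 0.
  apply/existsP; apply: contraR nz => /existsPn H.
  by apply/eqP; apply: big1 => k _; apply/eqP; move: (H k); rewrite negbK.
move: nzk; rewrite mulf_eq0 negb_or => /andP[n1 n2].
by rewrite (hA _ _ n1) (hB _ _ n2) -addrA [b + a]addrC.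
Qed.

Lemma homog_sub (a : int) A B : homog deg a A -> homog deg a B -> homog deg a (A - B).
Proof.
move=> hA hB i j; rewrite !mxE; have [Aij0|/hA //] := eqVneq (A i j) 0.
by rewrite Aij0 sub0r oppr_eq0; apply: hB.
Qed.

(* Swapping the factors changes the sign of each nonzero term [A i k * B k i]
   from [(-1)^(deg i)] to [(-1)^(deg k)], and [deg i = deg k + a]. *)
Lemma trs_mulC (a : int) A B : homog deg a A -> t (A *m B) = (-1) ^ a * t (B *m A).
Proof.
move=> hA; rewrite /trs.
under eq_bigr do rewrite mxE big_distrr.
rewrite mulr_sumr.
under [RHS]eq_bigr do rewrite mxE big_distrr mulr_sumr.
rewrite exchange_big /=; apply: eq_bigr => k _; apply: eq_bigr => i _.
have [->|nz] := eqVneq (A i k) 0; first by rewrite !(mul0r, mulr0).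
rewrite (hA _ _ nz) expfzDr ?oppr_eq0 ?oner_eq0 //; ring.
Qed.

Lemma trs_mulC_deg1 A B : homog deg 1 A -> t (A *m B) = - t (B *m A).
Proof. by move=> hA; rewrite (trs_mulC _ hA) expr1z mulN1r. Qed.

Lemma trs_mulC_degN1 A B : homog deg (-1) A -> t (A *m B) = - t (B *m A).
Proof. by move=> hA; rewrite (trs_mulC _ hA) exprN1 invrN1 mulN1r. Qed.

Lemma trs_mulC_deg0 A B : homog deg 0 A -> t (A *m B) = t (B *m A).
Proof. by move=> hA; rewrite (trs_mulC _ hA) expr0z mul1r. Qed.

Lemma anticomm_mulmxA A B (X : Mat) :
  A *m B + B *m A = 0 -> B *m (A *m X) = - (A *m (B *m X)).
Proof.
move=> AB; rewrite !mulmxA.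
have -> : B *m A = - (A *m B) by apply/eqP; rewrite -addr_eq0 addrC AB.
by rewrite mulNmx.
Qed.

Variables (A d : Mat).
Hypotheses (hA : homog deg 1 A) (hd : homog deg (-1) d) (Ad : A *m d + d *m A = 1%:M).

Lemma trs_homotopy_scomm F : homog deg 0 F -> t (A *m (d *m F)) - t (A *m (F *m d)) = t F.
Proof.
move=> hF; have hAF : homog deg 1 (A *m F) := homog_mul hA hF.
rewrite [A *m (F *m d)]mulmxA (trs_mulC_deg1 _ hAF) opprK !mulmxA -trsD -mulmxDl Ad.
by rewrite mul1mx.
Qed.

Lemma trs_homotopy_indep A' v :
  homog deg 1 A' -> homog deg (-1) v ->
  A' *m d + d *m A' = 1%:M -> d *m v + v *m d = 0 ->
  t (A *m v) = t (A' *m v).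
Proof.
move=> hA' hv A'd dv; pose B := A - A'.
have hB : homog deg 1 B by apply: homog_sub.
have Bd : B *m d + d *m B = 0.
  by rewrite /B mulmxBl mulmxBr addrACA -opprD Ad A'd subrr.
suff : t (B *m v) = 0 by rewrite /B mulmxBl trsB => /eqP; rewrite subr_eq0 => /eqP.
have -> : B *m v = B *m v *m (A *m d + d *m A) by rewrite Ad mulmx1.
have hBvA : homog deg 1 (B *m v *m A) := homog_mul (homog_mul hB hv) hA.
rewrite mulmxDr trsD mulmxA (trs_mulC_deg1 _ hBvA).
have -> : d *m (B *m v *m A) = B *m v *m d *m A.
  rewrite -!mulmxA (anticomm_mulmxA _ Bd).
  by rewrite (@anticomm_mulmxA v d) ?mulmxN ?opprK // addrC.
by rewrite -!mulmxA addNr.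
Qed.

Lemma trs_homotopy_sq U W : U *m d + d *m U = 0 -> W *m d + d *m W = 0 ->
  t (A *m (A *m (U *m W))) = 0.
Proof.
move=> Ud Wd.
have AAd Z : A *m (A *m (d *m Z)) = d *m (A *m (A *m Z)).
  have e1 : A *m d = 1%:M - d *m A by rewrite -Ad addrK.
  rewrite (mulmxA A d Z) e1 mulmxBl mul1mx mulmxBr -(mulmxA d A Z).
  rewrite (mulmxA A d) e1 mulmxBl mul1mx opprB addrC subrK.
  by rewrite -mulmxA.
have WdN : W *m d = - (d *m W) by apply/eqP; rewrite -addr_eq0 Wd.
have dU : d *m U + U *m d = 0 by rewrite addrC.
have -> : U = U *m (A *m d + d *m A) by rewrite Ad mulmx1.
rewrite mulmxDr mulmxDl !mulmxDr trsD -!mulmxA.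
apply/eqP; rewrite addrC addr_eq0; apply/eqP.
rewrite (anticomm_mulmxA _ dU) !mulmxN AAd trsN (trs_mulC_degN1 _ hd) opprK.
by rewrite -!mulmxA WdN !mulmxN trsN.
Qed.

Lemma trs_homotopy_deriv U W A1 :
  homog deg (-1) U -> homog deg (-1) W -> homog deg 1 A1 ->
  W *m d + d *m W = 0 -> A1 *m d + A *m U + (U *m A + d *m A1) = 0 ->
  t (A1 *m W) = - t (A *m (A *m (U *m W))) + t (U *m (A *m (W *m A))).
Proof.
move=> hU hW hA1 Wd A1d.
have -> : A1 *m W = A1 *m W *m (A *m d + d *m A) by rewrite Ad mulmx1.
have hA1WA : homog deg 1 (A1 *m W *m A) := homog_mul (homog_mul hA1 hW) hA.
rewrite mulmxDr trsD mulmxA (trs_mulC_deg1 _ hA1WA).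
have WdN : W *m d = - (d *m W) by apply/eqP; rewrite -addr_eq0 Wd.
have -> : A1 *m W *m (d *m A) = - (A1 *m d *m W *m A).
  by rewrite -!mulmxA (mulmxA W d) WdN mulNmx mulmxN -mulmxA.
rewrite trsN -opprD -trsD !mulmxA -mulmxDl -mulmxDl.
have -> : d *m A1 + A1 *m d = - (A *m U + U *m A).
  by apply/eqP; rewrite -addr_eq0 [d *m A1 + _]addrC addrACA [d *m A1 + _]addrC A1d.
have hAUW : homog deg (-1) (A *m U *m W) := homog_mul (homog_mul hA hU) hW.
rewrite !mulNmx trsN opprK !mulmxDl trsD (trs_mulC_degN1 _ hAUW).
by rewrite -!mulmxA.
Qed.

Lemma trs_homotopy_derivC W1 W2 A1 A2 :
  homog deg (-1) W1 -> homog deg (-1) W2 -> homog deg 1 A1 -> homog deg 1 A2 ->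
  W1 *m d + d *m W1 = 0 -> W2 *m d + d *m W2 = 0 ->
  A1 *m d + A *m W1 + (W1 *m A + d *m A1) = 0 ->
  A2 *m d + A *m W2 + (W2 *m A + d *m A2) = 0 ->
  t (A1 *m W2) = t (A2 *m W1).
Proof.
move=> hW1 hW2 hA1 hA2 W1d W2d A1d A2d.
rewrite (trs_homotopy_deriv hW1 hW2 hA1 W2d A1d) (trs_homotopy_deriv hW2 hW1 hA2 W1d A2d).
rewrite (trs_homotopy_sq W1d W2d) (trs_homotopy_sq W2d W1d).
have hW1A : homog deg 0 (W1 *m A) by have := homog_mul hW1 hA.
by rewrite !mulmxA -(mulmxA (W1 *m A)) (trs_mulC_deg0 _ hW1A) !mulmxA.
Qed.

End Supertrace.

Section ExactDifferentials.
Variables (R : realType) (n : nat) (deg : 'I_n -> int).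
Notation Mat := 'M[R[i]]_n.
Notation t := (trs deg).
Implicit Types (alpha : Mat -> Mat) (d v : Mat).

Lemma mapsInto_dirM m (phi : prm R m -> Mat) x w : smoothM phi -> mapsInto deg phi ->
  homog deg (-1) (dirM phi x w) /\ phi x *m dirM phi x w + dirM phi x w *m phi x = 0.
Proof.
move=> sphi mphi; split; first by apply: homog_dirM => y; case: (mphi y).
rewrite addrC -dirM_mul // (@dirM_ext _ _ _ _ (fun _ => 0)) ?dirM_cst // => y.
by case: (mphi y) => _ [].
Qed.

Lemma tangent_anticomm d v : tangent deg d v -> homog deg (-1) v /\ d *m v + v *m d = 0.
Proof. by case=> m [phi [x [w [sphi mphi <- <-]]]]; apply: mapsInto_dirM. Qed.

Lemma kappaE alpha d v : kappa deg alpha d v = - t (alpha d *m v).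
Proof. by rewrite /kappa /trs_form /lmul trsZ expr1 mulN1r. Qed.

Section Admissible.
Variable alpha : Mat -> Mat.
Hypothesis Halpha : admissible_alpha deg alpha.

Lemma kappa_indep alpha' : admissible_alpha deg alpha' ->
  forall d v, exact_diff deg d -> tangent deg d v ->
    kappa deg alpha d v = kappa deg alpha' d v.
Proof.
case: Halpha => _ hA [_ hA'] d v dD /tangent_anticomm[hv dv].
have [hAd Ad] := hA d dD; have [hA'd A'd] := hA' d dD.
by rewrite !kappaE (trs_homotopy_indep hAd Ad hA'd hv A'd dv).
Qed.

Lemma trs_lmul_scomm_taut f : form_section deg 0 f ->
  forall d v, exact_diff deg d -> tangent deg d v ->
    trs_form deg (lmul 1 alpha (scomm f 0 (@taut R n) 1)) d v = trs_form deg f d v.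
Proof.
case=> hf _ _ d v dD tv; have [hAd Ad] := Halpha.2 d dD.
rewrite /trs_form /lmul /scomm /rmul /lmul /taut /=.
rewrite !expr1 !scaleN1r opprK trsN mulmxBr trsB opprB.
exact: (trs_homotopy_scomm hAd Ad (hf d v dD tv)).
Qed.

Section Pullback.
Variables (m : nat) (phi : prm R m -> Mat).
Hypotheses (sphi : smoothM phi) (mphi : mapsInto deg phi).

Let salpha : smoothM (fun y => alpha (phi y)) := Halpha.1 m phi sphi mphi.

Lemma smoothC_kappa w : smoothC (fun y => kappa deg alpha (phi y) (dirM phi y w)).
Proof.
exact: (smoothC_trs deg (smoothM_scale _ (smoothM_mul salpha (smoothM_dir w sphi)))).
Qed.

Lemma dirC_kappa x u w :
  dirC (fun y => kappa deg alpha (phi y) (dirM phi y w)) x u =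
  - (t (dirM (fun y => alpha (phi y)) x u *m dirM phi x w)
     + t (alpha (phi x) *m dirM (fun y => dirM phi y w) x u)).
Proof.
have sAW := smoothM_mul salpha (smoothM_dir w sphi).
rewrite /kappa /trs_form /lmul /d_delta (dirC_trs _ _ _ (smoothM_scale _ sAW)).
rewrite (dirM_scale _ _ _ sAW) (dirM_mul _ _ salpha (smoothM_dir w sphi)).
by rewrite trsZ trsD expr1 mulN1r.
Qed.

(* Differentiating [alpha delta + delta alpha = 1]. *)
Lemma dirM_homotopy x w :
  let A1 := dirM (fun y => alpha (phi y)) x w in let W := dirM phi x w in
  A1 *m phi x + alpha (phi x) *m W + (W *m alpha (phi x) + phi x *m A1) = 0.
Proof.
move=> A1 W; rewrite /A1 /W -(dirM_mul _ _ salpha sphi) -(dirM_mul _ _ sphi salpha).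
rewrite -dirM_add; try exact: smoothM_mul.
rewrite (@dirM_ext _ _ _ _ (fun _ => 1%:M)) ?dirM_cst // => y.
by case: (Halpha.2 _ (mphi y)).
Qed.

End Pullback.

Lemma kappa_closed : closed_sform deg (kappa deg alpha).
Proof.
split=> [m phi w sphi mphi | phi sphi mphi x e1 e2]; first exact: smoothC_kappa.
clearbody e1 e2; apply: (etrans (dirC_kappa sphi mphi x e1 e2)).
apply: (etrans _ (esym (dirC_kappa sphi mphi x e2 e1))).
have [hAd Ad] := Halpha.2 _ (mphi x).
have [hW1 W1d] := mapsInto_dirM x e1 sphi mphi.
have [hW2 W2d] := mapsInto_dirM x e2 sphi mphi.
have hA w : homog deg 1 (dirM (fun y => alpha (phi y)) x w).
  by apply: homog_dirM => y; case: (Halpha.2 _ (mphi y)).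
rewrite addrC in W1d; rewrite addrC in W2d.
rewrite (trs_homotopy_derivC hAd (proj1 (mphi x)) Ad hW1 hW2 (hA e1) (hA e2) W1d W2d
           (dirM_homotopy sphi mphi x e1) (dirM_homotopy sphi mphi x e2)).
by rewrite (dirM_dirM e1 e2 x sphi).
Qed.

End Admissible.

End ExactDifferentials.

Theorem mainTheorem12 (R : realType) (n : nat) (deg : 'I_n -> int)
  (nonempty : exists d : 'M[R[i]]_n, exact_diff deg d)
  (alpha : 'M[R[i]]_n -> 'M[R[i]]_n)
  (Halpha : admissible_alpha deg alpha) :
  [/\ (forall alpha' : 'M[R[i]]_n -> 'M[R[i]]_n, admissible_alpha deg alpha' ->
         forall d v, exact_diff deg d -> tangent deg d v ->
           kappa deg alpha d v = kappa deg alpha' d v),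
      closed_sform deg (kappa deg alpha) &
      (forall f : eform R n, form_section deg 0 f ->
         forall d v, exact_diff deg d -> tangent deg d v ->
           trs_form deg (lmul 1 alpha (scomm f 0 (@taut R n) 1)) d v
           = trs_form deg f d v)].
Proof.
split; [exact: kappa_indep | exact: kappa_closed | exact: trs_lmul_scomm_taut].
Qed.
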